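(* Let $K:X\times X\to\mathbb{R}$ be positive definite and $S\subset X$ a countable subset with $\delta_x\in\mathscr{H}(K^{(S)})$ for all $x\in S$, where $K^{(S)}=K|_{S\times S}$. Let $\Delta$ be the graph Laplacian $(\Delta h)(x)=\langle\delta_x,h\rangle_{\mathscr{H}(K^{(S)})}$ for $x\in S$, $h\in\mathscr{H}(K^{(S)})$. For finite $F\subset S$ let $K_F=(K(x,y))_{x,y\in F}$ and let $P_F$ be the orthogonal projection of $\mathscr{H}(K^{(S)})$ onto $\mathrm{span}\{K^{(S)}(\cdot,y):y\in F\}$. Then, for every $h\in\mathscr{H}(K^{(S)})$: (1) $\|h\|^2_{\mathscr{H}(K^{(S)})}=\sup_F\langle h|_F,(\Delta P_Fh)|_F\rangle_{\ell^2(F)}=\sup_F\langle h|_F,K_F^{-1}(h|_F)\rangle_{\ell^2(F)}$, the suprema over all finite $F\subset S$; (2) for every finite $F\subset S$ and $x\in F$, $(\Delta(P_Fh))(x)=(K_F^{-1}(h|_F))(x)$; (3) for every finite $F\subset S$, $K_F\big((\Delta P_Fh)|_F\big)=h|_F$.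
   Context: $\delta_x$ is the function on $S$ equal to $1$ at $x$ and $0$ elsewhere; $\mathscr{H}(K^{(S)})$ is the reproducing kernel Hilbert space of $K^{(S)}$ on $S$ (completion of the span of $K^{(S)}(\cdot,s)$, $\langle K^{(S)}(\cdot,s),K^{(S)}(\cdot,t)\rangle=K(s,t)$, $\langle K^{(S)}(\cdot,s),h\rangle=h(s)$). Under the hypothesis, each $K_F$ is invertible. *)

From HB Require Import structures.
From mathcomp Require Import all_boot all_order all_algebra.
From mathcomp Require Import finmap.
From mathcomp Require Import boolp classical_sets cardinality reals constructive_ereal.
Set Implicit Arguments. Unset Strict Implicit. Unset Printing Implicit Defensive.
Import Order.TTheory GRing.Theory Num.Theory.
Local Open Scope ring_scope.
Local Open Scope classical_set_scope.
Local Open Scope fset_scope.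
Local Open Scope ring_scope.

Section RKHS.
Variable R : realType.

(* The points of a subset S of X, as a type with (classical) decidable
   equality and choice, so that finite subsets of S are {fset pts S}. *)
Definition pts (X : Type) (S : set X) := {classic (set_type S)}.

Definition pos_def_kernel (X : Type) (K : X -> X -> R) : Prop :=
  (forall x y, K x y = K y x) /\
  (forall (n : nat) (x : 'I_n -> X) (c : 'I_n -> R),
      0 <= \sum_(i < n) \sum_(j < n) c i * c j * K (x i) (x j)).

Section OnT.
Variable T : Type.

Definition kfun (k : T -> T -> R) (t : T) : T -> R := fun s => k s t.

Definition kspan (k : T -> T -> R) (A : set T) : set (T -> R) :=
  [set g | exists (n : nat) (t : 'I_n -> T) (c : 'I_n -> R),
       (forall i, A (t i)) /\ g = (fun s => \sum_(i < n) c i * k s (t i))].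

Definition fsub (f g : T -> R) : T -> R := fun s => f s - g s.

(* (H, ip) is the reproducing kernel Hilbert space H(k) of k on T:
   the completion of span{k(.,t)} with <k(.,s), k(.,t)> = k(s,t),
   realized as a Hilbert space of functions on T with the reproducing
   property <k(.,t), h> = h(t). *)
Record is_RKHS (k : T -> T -> R) (H : set (T -> R))
    (ip : (T -> R) -> (T -> R) -> R) : Prop := {
  rk_mem : forall t, H (kfun k t);
  rk_lin : forall (a : R) f g, H f -> H g -> H (fun s => a * f s + g s);
  ip_sym : forall f g, H f -> H g -> ip f g = ip g f;
  ip_linl : forall (a : R) f g h, H f -> H g -> H h ->
     ip (fun s => a * f s + g s) h = a * ip f h + ip g h;
  ip_ge0 : forall f, H f -> 0 <= ip f f;
  ip_eq0 : forall f, H f -> ip f f = 0 -> f = (fun _ => 0 : R);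
  rk_repr : forall t f, H f -> ip (kfun k t) f = f t;
  rk_complete : forall u : nat -> T -> R, (forall n, H (u n)) ->
     (forall e : R, 0 < e -> exists N : nat, forall m n : nat,
          (N <= m)%N -> (N <= n)%N -> ip (fsub (u m) (u n)) (fsub (u m) (u n)) < e) ->
     exists f, H f /\ (forall e : R, 0 < e -> exists N : nat, forall n : nat,
          (N <= n)%N -> ip (fsub (u n) f) (fsub (u n) f) < e);
  rk_dense : forall f, H f -> forall e : R, 0 < e ->
     exists g, kspan k setT g /\ ip (fsub f g) (fsub f g) < e
}.

Definition is_orth_proj (k : T -> T -> R) (ip : (T -> R) -> (T -> R) -> R)
    (A : set T) (h g : T -> R) : Prop :=
  kspan k A g /\ forall y, A y -> ip (fsub h g) (kfun k y) = 0.

End OnT.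

Section OnS.
Variables (X : Type) (S : set X).
Local Notation sT := (pts S).

Definition restrK (K : X -> X -> R) : sT -> sT -> R :=
  fun s t => K (val s) (val t).

Definition dirac_fun (x : sT) : sT -> R := fun s => if s == x then 1 else 0.

Definition laplacian (ip : (sT -> R) -> (sT -> R) -> R) (h : sT -> R) : sT -> R :=
  fun x => ip (dirac_fun x) h.

Definition fpt (F : {fset sT}) (i : 'I_#|{: F}|) : sT := val (enum_val i).

Definition gramF (K : X -> X -> R) (F : {fset sT}) : 'M[R]_#|{: F}| :=
  \matrix_(i, j) K (val (fpt i)) (val (fpt j)).

Definition restrF (F : {fset sT}) (h : sT -> R) : 'cV[R]_#|{: F}| :=
  \col_i h (fpt i).

Definition l2dot (n : nat) (u v : 'cV[R]_n) : R := \sum_(i < n) u i 0 * v i 0.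

End OnS.
End RKHS.
Arguments dirac_fun {R X S} x _.

(** The orthogonal projection of [h] onto [span {K(., y) : y in F}] is the
    combination [sum_j a_j K(., x_j)] over the points [x_j] of [F] that
    interpolates [h] on [F], i.e. with [K_F a = h|_F].  Since
    [<delta_x, K(., t)> = delta_x(t)], the Laplacian reads off the
    coefficients: [(Delta P_F h)|_F = a], which gives (2) and (3), and
    [||P_F h||^2 = <h|_F, a>].  By Pythagoras these norms are at most
    [||h||^2], and they approach it because the kernel sections are dense.
    [K_F] is invertible because the Dirac functions lie in the RKHS: if
    [K_F a = 0], the combination vanishes on [F], hence has norm [0], and
    applying [Delta] to it gives [a = 0]. *)
From Pilot Require Import Defs.
From HB Require Import structures.
From mathcomp Require Import all_boot all_order all_algebra.
From mathcomp Require Import finmap.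
From mathcomp Require Import boolp classical_sets cardinality reals constructive_ereal ereal.
From mathcomp Require Import lra.
Import Order.TTheory GRing.Theory Num.Theory.
Local Open Scope classical_set_scope.
Local Open Scope fset_scope.
Local Open Scope ring_scope.

Local Notation fsub := Pilot.Defs.fsub.

Set Implicit Arguments.
Unset Strict Implicit.

Lemma rkhs_mem0 (R : realType) (T : Type) (k : T -> T -> R) (H : set (T -> R))
    (ip : (T -> R) -> (T -> R) -> R) f :
  is_RKHS k H ip -> H f -> H (fun _ => 0).
Proof.
move=> rkhs Hf; rewrite (_ : (fun _ => 0) = fun s => -1 * f s + f s).
  exact: (rk_lin rkhs).
by apply: funext => s; rewrite mulN1r addNr.
Qed.

Section RKHSGeometry.
Variables (R : realType) (T : Type) (k : T -> T -> R) (H : set (T -> R))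
  (ip : (T -> R) -> (T -> R) -> R).
Hypothesis rkhs : is_RKHS k H ip.
Hypothesis mem0 : H (fun _ => 0).

Definition lincomb n (c : 'I_n -> R) (f : 'I_n -> T -> R) : T -> R :=
  fun s => \sum_(i < n) c i * f i s.

Lemma lincomb_recl n (c : 'I_n.+1 -> R) f :
  lincomb c f = fun s => c ord0 * f ord0 s + lincomb (c \o lift ord0) (f \o lift ord0) s.
Proof. by apply: funext => s; rewrite /lincomb big_ord_recl. Qed.

Lemma mem_lincomb n (c : 'I_n -> R) f : (forall i, H (f i)) -> H (lincomb c f).
Proof.
elim: n c f => [|n IH] c f Hf.
  by rewrite (_ : lincomb c f = fun _ => 0) //; apply: funext => s; rewrite /lincomb big_ord0.
by rewrite lincomb_recl; apply: (rk_lin rkhs) => //; apply: IH => i; exact: Hf.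
Qed.

Lemma ip0l f : H f -> ip (fun _ => 0) f = 0.
Proof.
move=> Hf; have := ip_linl rkhs 1 mem0 mem0 Hf.
have -> : (fun _ : T => 1 * 0 + 0) = fun _ => 0 :> R.
  by apply: funext => s; rewrite mulr0 addr0.
by rewrite mul1r => /eqP; rewrite -subr_eq subrr eq_sym => /eqP.
Qed.

Lemma ip_lincombl n (c : 'I_n -> R) f g : (forall i, H (f i)) -> H g ->
  ip (lincomb c f) g = \sum_i c i * ip (f i) g.
Proof.
elim: n c f => [|n IH] c f Hf Hg.
  rewrite big_ord0 -(ip0l Hg); congr ip.
  by apply: funext => s; rewrite /lincomb big_ord0.
have Hf' i : H ((f \o lift ord0) i) by exact: Hf.
by rewrite lincomb_recl (ip_linl rkhs) ?IH ?big_ord_recl //; apply: mem_lincomb.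
Qed.

Lemma ip_lincombr n (c : 'I_n -> R) f g : (forall i, H (f i)) -> H g ->
  ip g (lincomb c f) = \sum_i c i * ip g (f i).
Proof.
move=> Hf Hg; rewrite (ip_sym rkhs) ?ip_lincombl //; last exact: mem_lincomb.
by apply: eq_bigr => i _; rewrite (ip_sym rkhs).
Qed.

Lemma fsubE (f g : T -> R) : fsub f g = fun s => -1 * g s + f s.
Proof. by apply: funext => s; rewrite /fsub mulN1r addrC. Qed.

Lemma mem_fsub (f g : T -> R) : H f -> H g -> H (fsub f g).
Proof. by move=> Hf Hg; rewrite fsubE; apply: (rk_lin rkhs). Qed.

Lemma ip_fsubl (f g u : T -> R) : H f -> H g -> H u -> ip (fsub f g) u = ip f u - ip g u.
Proof. by move=> Hf Hg Hu; rewrite fsubE (ip_linl rkhs) // mulN1r addrC. Qed.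

Lemma ip_fsubr (f g u : T -> R) : H f -> H g -> H u -> ip u (fsub f g) = ip u f - ip u g.
Proof.
move=> Hf Hg Hu; rewrite (ip_sym rkhs) ?ip_fsubl //; last exact: mem_fsub.
by rewrite !(ip_sym rkhs Hu).
Qed.

Lemma pythagoras_fsub (u v : T -> R) : H u -> H v -> ip (fsub u v) v = 0 ->
  ip u u = ip v v + ip (fsub u v) (fsub u v).
Proof.
move=> Hu Hv orth; have Huv := mem_fsub Hu Hv.
have uv : ip u v = ip v v by apply/eqP; rewrite -subr_eq0 -ip_fsubl ?orth.
have orth' : ip v (fsub u v) = 0 by rewrite (ip_sym rkhs).
by rewrite [ip (fsub u v) _]ip_fsubl // orth' subr0 ip_fsubr // uv addrCA subrr addr0.
Qed.

Lemma mem_kspan A g : kspan k A g -> H g.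
Proof.
by case=> n [t [c [_ ->]]]; exact: (mem_lincomb c (fun i => rk_mem rkhs (t i))).
Qed.

Section OrthProj.
Variables (A : set T) (h g : T -> R).
Hypotheses (Hh : H h) (proj : is_orth_proj k ip A h g).

Let Hg : H g := mem_kspan proj.1.

Lemma orth_proj_orthogonal f : kspan k A f -> ip (fsub h g) f = 0.
Proof.
case=> n [t [c [At ->]]].
rewrite (ip_lincombr c (f := fun i => kfun k (t i))) //; last exact: mem_fsub.
  by apply: big1 => i _; rewrite proj.2 // mulr0.
by move=> i; exact: (rk_mem rkhs).
Qed.

Lemma orth_proj_norm : ip h h = ip g g + ip (fsub h g) (fsub h g).
Proof. exact/pythagoras_fsub/orth_proj_orthogonal/proj.1. Qed.

Lemma orth_proj_min f : kspan k A f ->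
  ip (fsub h g) (fsub h g) <= ip (fsub h f) (fsub h f).
Proof.
move=> Af; have Hf := mem_kspan Af.
have Hhg := mem_fsub Hh Hg; have Hhf := mem_fsub Hh Hf.
have diff : fsub (fsub h f) (fsub h g) = fsub g f.
  by apply: funext => s; rewrite /fsub; lra.
have orth : ip (fsub (fsub h f) (fsub h g)) (fsub h g) = 0.
  rewrite diff (ip_sym rkhs (mem_fsub Hg Hf) Hhg) ip_fsubr //.
  by rewrite !orth_proj_orthogonal ?subrr //; exact: proj.1.
rewrite (pythagoras_fsub Hhf Hhg orth) lerDl diff.
exact/(ip_ge0 rkhs)/mem_fsub.
Qed.

End OrthProj.

Lemma orth_proj_unique A h g g' : H h ->
  is_orth_proj k ip A h g -> is_orth_proj k ip A h g' -> g = g'.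
Proof.
move=> Hh proj proj'; have Hg := mem_kspan proj.1; have Hg' := mem_kspan proj'.1.
have Hd := mem_fsub Hg Hg'.
have orth u : is_orth_proj k ip A h u -> ip (fsub h u) (fsub g g') = 0.
  move=> proju; have Hhu := mem_fsub Hh (mem_kspan proju.1).
  rewrite ip_fsubr // !(orth_proj_orthogonal Hh proju) ?subrr //.
  - exact: proj'.1.
  - exact: proj.1.
have diff : fsub g g' = fsub (fsub h g') (fsub h g).
  by apply: funext => s; rewrite /fsub; lra.
have : ip (fsub g g') (fsub g g') = 0.
  by rewrite {1}diff ip_fsubl ?orth ?subrr //; apply: mem_fsub.
move=> /(ip_eq0 rkhs Hd) eq0; apply: funext => s.
by apply/eqP; rewrite -subr_eq0 -[g s - g' s]/(fsub g g' s) eq0.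
Qed.

Lemma interp_orth_proj A h g : H h -> kspan k A g -> (forall y, A y -> g y = h y) ->
  is_orth_proj k ip A h g.
Proof.
move=> Hh Ag interp; split=> // y Ay; have Hhg := mem_fsub Hh (mem_kspan Ag).
by rewrite (ip_sym rkhs Hhg (rk_mem rkhs y)) (rk_repr rkhs y Hhg) /fsub interp ?subrr.
Qed.
End RKHSGeometry.

Lemma ereal_sup_approx (R : realType) (E : set \bar R) (x : R) :
  (forall y, E y -> y <= x%:E)%E ->
  (forall e, 0 < e -> exists2 r : R, E r%:E & x - e < r) ->
  ereal_sup E = x%:E.
Proof.
move=> ub approx; apply/le_anti; rewrite ge_ereal_sup //=.
apply/lee_addgt0Pr => e e0; have [r Er lt_r] := approx e e0.
apply: le_trans (leeD2r _ (ereal_sup_ubound Er)).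
by rewrite -EFinD lee_fin; lra.
Qed.

Section Laplacian.
Variables (R : realType) (X : Type) (K : X -> X -> R) (S : set X)
  (H : set (pts S -> R)) (ip : (pts S -> R) -> (pts S -> R) -> R).
Hypotheses (rkhs : is_RKHS (restrK K) H ip) (mem0 : H (fun _ => 0))
  (mem_dirac : forall x, H (dirac_fun x)) (Ksym : forall x y, K x y = K y x).

Lemma laplacian_kfun x t : laplacian ip (kfun (restrK K) t) x = dirac_fun x t.
Proof.
by rewrite /laplacian (ip_sym rkhs (mem_dirac x) (rk_mem rkhs t)) (rk_repr rkhs t).
Qed.

Lemma laplacian0 x : laplacian ip (fun _ => 0) x = 0.
Proof. by rewrite /laplacian (ip_sym rkhs (mem_dirac x) mem0) (ip0l rkhs mem0). Qed.

Section FiniteSubset.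
Variable F : {fset pts S}.
Local Notation n := #|{: F}|.

Lemma fpt_in (i : 'I_n) : fpt i \in F.
Proof. exact: fsvalP. Qed.

Lemma fpt_inj : injective (@fpt X S F).
Proof. by move=> i j /val_inj /enum_val_inj. Qed.

Lemma fptP y : y \in F -> exists i : 'I_n, fpt i = y.
Proof. by move=> yF; exists (enum_rank [` yF]); rewrite /fpt enum_rankK. Qed.

Lemma sum_dirac_fpt (a : 'I_n -> R) (i : 'I_n) :
  \sum_j a j * dirac_fun (fpt i) (fpt j) = a i.
Proof.
rewrite (bigD1 i) //= /dirac_fun eqxx mulr1 big1 ?addr0 // => j ji.
by rewrite (inj_eq fpt_inj) (negbTE ji) mulr0.
Qed.

Definition kcomb (a : 'cV[R]_n) : pts S -> R :=
  lincomb (fun j => a j 0) (fun j => kfun (restrK K) (fpt j)).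

Lemma kspan_kcomb a : kspan (restrK K) [set y | y \in F] (kcomb a).
Proof. by exists n, (@fpt X S F), (fun j => a j 0); split=> // j; exact: fpt_in. Qed.

Lemma mem_kcomb a : H (kcomb a).
Proof. exact: mem_kspan rkhs mem0 _ _ (kspan_kcomb a). Qed.

Lemma restrF_kcomb a : restrF F (kcomb a) = gramF K F *m a.
Proof. by apply/colP => i; rewrite !mxE; apply: eq_bigr => j _; rewrite mxE mulrC. Qed.

Lemma laplacian_kcomb a : restrF F (laplacian ip (kcomb a)) = a.
Proof.
apply/colP => i; rewrite mxE -[RHS](sum_dirac_fpt (fun j => a j 0)).
rewrite /laplacian (ip_lincombr rkhs mem0 _ (fun j => rk_mem rkhs (fpt j)) (mem_dirac _)).
by apply: eq_bigr => j _; rewrite -laplacian_kfun.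
Qed.

Lemma ip_kcombr f a : H f -> ip f (kcomb a) = l2dot (restrF F f) a.
Proof.
move=> Hf; rewrite (ip_lincombr rkhs mem0 _ (fun j => rk_mem rkhs (fpt j)) Hf).
apply: eq_bigr => j _.
by rewrite (ip_sym rkhs Hf (rk_mem rkhs _)) (rk_repr rkhs _ Hf) mxE mulrC.
Qed.

Lemma gramF_trmx : (gramF K F)^T = gramF K F.
Proof. by apply/matrixP => i j; rewrite !mxE Ksym. Qed.

Lemma gramF_ker0 (a : 'cV[R]_n) : gramF K F *m a = 0 -> a = 0.
Proof.
move=> Ka; have norm0 : ip (kcomb a) (kcomb a) = 0.
  rewrite ip_kcombr ?restrF_kcomb ?Ka /l2dot; last exact: mem_kcomb.
  by apply: big1 => i _; rewrite mxE mul0r.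
rewrite -[a]laplacian_kcomb (ip_eq0 rkhs (mem_kcomb a) norm0).
by apply/colP => i; rewrite !mxE laplacian0.
Qed.

Lemma gramF_unit : gramF K F \in unitmx.
Proof.
rewrite -row_free_unit; apply: inj_row_free => v vK.
apply: trmx_inj; rewrite trmx0; apply: gramF_ker0.
by rewrite -gramF_trmx -trmx_mul vK trmx0.
Qed.

Definition projF (h : pts S -> R) : pts S -> R :=
  kcomb (invmx (gramF K F) *m restrF F h).

Lemma restrF_projF h : restrF F (projF h) = restrF F h.
Proof. by rewrite restrF_kcomb mulKVmx // gramF_unit. Qed.

Lemma orth_proj_projF h : H h -> is_orth_proj (restrK K) ip [set y | y \in F] h (projF h).
Proof.
move=> Hh; apply: (interp_orth_proj rkhs mem0 Hh (kspan_kcomb _)).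
move=> _ /fptP [i <-]; have := congr1 (fun v : 'cV[R]_n => v i 0) (restrF_projF h).
by rewrite !mxE.
Qed.

Lemma orth_projE h g : H h ->
  is_orth_proj (restrK K) ip [set y | y \in F] h g -> g = projF h.
Proof. by move=> Hh proj; apply: orth_proj_unique Hh proj (orth_proj_projF Hh). Qed.

Lemma laplacian_orth_proj h g : H h ->
  is_orth_proj (restrK K) ip [set y | y \in F] h g ->
  restrF F (laplacian ip g) = invmx (gramF K F) *m restrF F h.
Proof. by move=> Hh /(orth_projE Hh) ->; rewrite laplacian_kcomb. Qed.

Lemma norm_projF h : H h ->
  ip (projF h) (projF h) = l2dot (restrF F h) (invmx (gramF K F) *m restrF F h).
Proof. by move=> Hh; rewrite {2}/projF ip_kcombr ?restrF_projF //; exact: mem_kcomb. Qed.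

End FiniteSubset.

Lemma norm_sup_projF h : H h ->
  ereal_sup [set r | exists F : {fset pts S},
    r = (l2dot (restrF F h) (invmx (gramF K F) *m restrF F h))%:E] = (ip h h)%:E.
Proof.
move=> Hh; apply: ereal_sup_approx.
  move=> _ [F ->]; have proj := orth_proj_projF F Hh.
  rewrite lee_fin -norm_projF // (orth_proj_norm rkhs mem0 Hh proj) lerDl.
  by apply: (ip_ge0 rkhs); apply: (mem_fsub rkhs Hh); exact: mem_kcomb.
move=> e e0; have [f [[m [t [c [_ ->]]]] close]] := rk_dense rkhs Hh e0.
pose F := [fset t i | i : 'I_m].
exists (l2dot (restrF F h) (invmx (gramF K F) *m restrF F h)); first by exists F.
have Af : kspan (restrK K) [set y | y \in F] (fun s => \sum_i c i * restrK K s (t i)).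
  by exists m, t, c; split=> // i; apply/imfsetP; exists i.
have proj := orth_proj_projF F Hh.
have := orth_proj_min rkhs mem0 Hh proj Af; have := orth_proj_norm rkhs mem0 Hh proj.
rewrite norm_projF //; lra.
Qed.

End Laplacian.

Unset Implicit Arguments.
Set Strict Implicit.

Theorem corollary8p16 (R : realType) (X : Type) (K : X -> X -> R) (S : set X)
  (H : set (pts S -> R)) (ip : (pts S -> R) -> (pts S -> R) -> R) :
  pos_def_kernel K ->
  countable S ->
  is_RKHS (restrK K) H ip ->
  (forall x : pts S, H (dirac_fun (R:=R) x)) ->
  forall h, H h ->
    (* (1) *)
    ((ip h h)%:E =
       ereal_sup [set r : \bar R | exists (F : {fset pts S}) (g : pts S -> R),
           is_orth_proj (restrK K) ip [set y | y \in F] h g /\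
           r = (l2dot (restrF F h) (restrF F (laplacian ip g)))%:E]
     /\ (ip h h)%:E =
       ereal_sup [set r : \bar R | exists F : {fset pts S},
           r = (l2dot (restrF F h) (invmx (gramF K F) *m restrF F h))%:E])
    (* (2) *)
    /\ (forall (F : {fset pts S}) (g : pts S -> R),
          is_orth_proj (restrK K) ip [set y | y \in F] h g ->
          forall i : 'I_#|{: F}|,
            laplacian ip g (fpt i) = (invmx (gramF K F) *m restrF F h) i 0)
    (* (3) *)
    /\ (forall (F : {fset pts S}) (g : pts S -> R),
          is_orth_proj (restrK K) ip [set y | y \in F] h g ->
          gramF K F *m restrF F (laplacian ip g) = restrF F h).
Proof.
move=> [Ksym _] _ rkhs mem_dirac h Hh.
have mem0 := rkhs_mem0 rkhs Hh.
have norm_sup := norm_sup_projF rkhs mem0 mem_dirac Ksym Hh.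
have lap_proj F g := @laplacian_orth_proj R X K S H ip rkhs mem0 mem_dirac Ksym F h g Hh.
split; first split; last split.
- rewrite -norm_sup; congr ereal_sup; apply/seteqP; split=> r.
    move=> [F ->]; have proj := orth_proj_projF rkhs mem0 mem_dirac Ksym F Hh.
    by exists F, (projF K F h); rewrite lap_proj.
  by move=> [F [g [/lap_proj -> ->]]]; exists F.
- by rewrite norm_sup.
- by move=> F g /lap_proj eq_lap i; rewrite -eq_lap mxE.
- by move=> F g /lap_proj ->; rewrite mulKVmx ?(gramF_unit rkhs mem0 mem_dirac Ksym).
Qed.
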